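(* Let $I$ be an open interval and $U$ a subgroup of $\mathrm{Homeo}^+(I)$ such that $U$ acts transitively on $I$, the commutator subgroup $[U,U]$ acts freely on $I$, and each non-identity member of $U$ has only finitely many fixed points. Then each non-identity member of $U$ has at most one fixed point.
   Context: $\mathrm{Homeo}^+(I)$ is the group of increasing homeomorphisms of $I$. $U$ acts transitively if for all $x,y\in I$ some $\varphi\in U$ has $\varphi(x)=y$. $[U,U]$ acts freely if no non-identity element of $[U,U]$ has a fixed point in $I$. *)

From Stdlib Require Import Reals List.
From Coquelicot Require Import Rbar.
Open Scope R_scope.

Definition is_open_interval (I : R -> Prop) : Prop :=
  exists a b : Rbar, Rbar_lt a b /\
    forall x, I x <-> (Rbar_lt a x /\ Rbar_lt x b).

(* Functions on I are represented by functions R -> R; only their values on I matter. *)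
Definition maps_into (I : R -> Prop) (f : R -> R) : Prop :=
  forall x, I x -> I (f x).

Definition inverse_on (I : R -> Prop) (f g : R -> R) : Prop :=
  maps_into I g /\ (forall x, I x -> g (f x) = x) /\ (forall x, I x -> f (g x) = x).

Definition homeo_plus (I : R -> Prop) (f : R -> R) : Prop :=
  maps_into I f /\
  (forall x y, I x -> I y -> x < y -> f x < f y) /\
  (forall x, I x -> continuity_pt f x) /\
  exists g, inverse_on I f g /\ forall y, I y -> continuity_pt g y.

(* U is a subgroup of Homeo^+(I) (elements compared by their action on I). *)
Definition is_subgroup_homeo (I : R -> Prop) (U : (R -> R) -> Prop) : Prop :=
  (forall f, U f -> homeo_plus I f) /\
  U (fun x => x) /\
  (forall f g, U f -> U g -> U (fun x => f (g x))) /\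
  (forall f, U f -> exists g, U g /\ inverse_on I f g).

Definition commutators (I : R -> Prop) (U : (R -> R) -> Prop) (h : R -> R) : Prop :=
  exists f g fi gi, U f /\ U g /\ U fi /\ U gi /\
    inverse_on I f fi /\ inverse_on I g gi /\
    h = (fun x => fi (gi (f (g x)))).

Inductive gen_subgroup (I : R -> Prop) (S : (R -> R) -> Prop) : (R -> R) -> Prop :=
| gen_base : forall h, S h -> gen_subgroup I S h
| gen_id : gen_subgroup I S (fun x => x)
| gen_comp : forall h k, gen_subgroup I S h -> gen_subgroup I S k ->
    gen_subgroup I S (fun x => h (k x))
| gen_inv : forall h k, gen_subgroup I S h -> inverse_on I h k -> gen_subgroup I S k.

Definition commutator_subgroup (I : R -> Prop) (U : (R -> R) -> Prop) :=
  gen_subgroup I (commutators I U).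

Definition is_identity_on (I : R -> Prop) (f : R -> R) : Prop :=
  forall x, I x -> f x = x.

Definition acts_transitively (I : R -> Prop) (U : (R -> R) -> Prop) : Prop :=
  forall x y, I x -> I y -> exists f, U f /\ f x = y.

Definition acts_freely (I : R -> Prop) (G : (R -> R) -> Prop) : Prop :=
  forall h, G h -> ~ is_identity_on I h -> forall x, I x -> h x <> x.

Definition finitely_many_fixed_points (I : R -> Prop) (f : R -> R) : Prop :=
  exists l : list R, forall x, I x -> f x = x -> In x l.

Definition at_most_one_fixed_point (I : R -> Prop) (f : R -> R) : Prop :=
  forall x y, I x -> I y -> f x = x -> f y = y -> x = y.

(* Let f in U fix a < m, where m is the largest fixed point of f.  Pick g in U
   with g a = m.  The commutator f^-1 g^-1 f g fixes a, so by freeness it is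
   the identity: f and g commute.  Hence g m is again a fixed point of f, and
   g m > g a = m contradicts the maximality of m. *)
From Stdlib Require Import Reals List.
From Stdlib Require Import Classical Lra.

Lemma finite_nonempty_has_max (P : R -> Prop) (l : list R) :
  (forall x, P x -> In x l) -> forall x0, P x0 ->
  exists m, P m /\ forall y, P y -> y <= m.
Proof.
  intros Hl x0 Px0.
  assert (Hmax : forall l', (exists x, P x /\ In x l') ->
            exists m, P m /\ forall y, P y -> In y l' -> y <= m).
  { induction l' as [|c l' IH]; intros [x [Px Inx]]; [destruct Inx|].
    destruct (classic (exists x, P x /\ In x l')) as [Hex|Hnex].
    - destruct (IH Hex) as [m [Pm Hm]].
      destruct (classic (P c)) as [Pc|nPc].
      + destruct (Rle_dec c m).
        * exists m; split; [exact Pm|].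
          intros y Py [<-|Iny]; [lra|auto].
        * exists c; split; [exact Pc|].
          intros y Py [<-|Iny]; [lra|specialize (Hm y Py Iny); lra].
      + exists m; split; [exact Pm|].
        intros y Py [<-|Iny]; [contradiction|auto].
    - assert (Pc : P c).
      { destruct Inx as [<-|Inx]; [exact Px|exfalso; eauto]. }
      exists c; split; [exact Pc|].
      intros y Py [<-|Iny]; [lra|exfalso; eauto]. }
  destruct (Hmax l) as [m [Pm Hm]]; eauto.
Qed.

Lemma inverse_on_eq (I : R -> Prop) (f fi : R -> R) x y :
  inverse_on I f fi -> I x -> f x = y -> fi y = x.
Proof. intros [_ [Hfif _]] Ix <-. auto. Qed.

Lemma commutator_fixes_point (I : R -> Prop) (f g fi gi : R -> R) a m :
  inverse_on I f fi -> inverse_on I g gi -> I a ->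
  f a = a -> f m = m -> g a = m -> fi (gi (f (g a))) = a.
Proof.
  intros Hf Hg Ia fa fm ga.
  rewrite ga, fm, (inverse_on_eq I g gi a m Hg Ia ga).
  exact (inverse_on_eq I f fi a a Hf Ia fa).
Qed.

Lemma trivial_commutator_commute (I : R -> Prop) (f g fi gi : R -> R) :
  maps_into I f -> maps_into I g ->
  inverse_on I f fi -> inverse_on I g gi ->
  is_identity_on I (fun x => fi (gi (f (g x)))) ->
  forall x, I x -> f (g x) = g (f x).
Proof.
  intros mf mg [mfi [_ Hffi]] [mgi [_ Hggi]] Hid x Ix.
  assert (Ifg : I (f (g x))) by auto.
  assert (Hx : fi (gi (f (g x))) = x) by exact (Hid x Ix).
  rewrite <- Hx at 2. rewrite Hffi, Hggi; auto.
Qed.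

Lemma free_fixing_is_identity (I : R -> Prop) (G : (R -> R) -> Prop) h x :
  acts_freely I G -> G h -> I x -> h x = x -> is_identity_on I h.
Proof.
  intros Hfree Gh Ix hx. apply NNPP. intros Hnid.
  exact (Hfree h Gh Hnid x Ix hx).
Qed.

Section Transitive_free_commutators.

Variables (I : R -> Prop) (U : (R -> R) -> Prop).
Hypothesis HU : is_subgroup_homeo I U.
Hypothesis Htrans : acts_transitively I U.
Hypothesis Hfree : acts_freely I (commutator_subgroup I U).

Lemma fixed_point_above f a m :
  U f -> I a -> I m -> f a = a -> f m = m -> a < m ->
  exists z, I z /\ f z = z /\ m < z.
Proof.
  destruct HU as [Hhomeo [_ [_ Hinv]]].
  intros Uf Ia Im fa fm am.
  destruct (Htrans a m Ia Im) as [g [Ug ga]].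
  destruct (Hinv f Uf) as [fi [Ufi Hf]].
  destruct (Hinv g Ug) as [gi [Ugi Hg]].
  destruct (Hhomeo f Uf) as [mf _].
  destruct (Hhomeo g Ug) as [mg [incg _]].
  assert (Hcomm : commutator_subgroup I U (fun x => fi (gi (f (g x))))).
  { apply gen_base. exists f, g, fi, gi. tauto. }
  assert (Hid : is_identity_on I (fun x => fi (gi (f (g x))))).
  { apply (free_fixing_is_identity I _ _ a Hfree Hcomm Ia).
    exact (commutator_fixes_point I f g fi gi a m Hf Hg Ia fa fm ga). }
  exists (g m); split; [auto|split].
  - rewrite (trivial_commutator_commute I f g fi gi mf mg Hf Hg Hid m Im), fm.
    reflexivity.
  - rewrite <- ga at 1. apply incg; auto.
Qed.

End Transitive_free_commutators.

Theorem lemma4p1 (I : R -> Prop) (U : (R -> R) -> Prop) :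
  is_open_interval I ->
  is_subgroup_homeo I U ->
  acts_transitively I U ->
  acts_freely I (commutator_subgroup I U) ->
  (forall f, U f -> ~ is_identity_on I f -> finitely_many_fixed_points I f) ->
  forall f, U f -> ~ is_identity_on I f -> at_most_one_fixed_point I f.
Proof.
  intros _ HU Htrans Hfree Hfin f Uf nid.
  assert (Hlt : forall a b, I a -> I b -> f a = a -> f b = b -> a < b -> False).
  { intros a b Ia Ib fa fb ab.
    destruct (Hfin f Uf nid) as [l Hl].
    destruct (finite_nonempty_has_max (fun z => I z /\ f z = z) l)
      with (x0 := b) as [m [[Im fm] Hm]]; [intros z [Iz fz]; auto | auto |].
    assert (bm : b <= m) by (apply Hm; auto).
    destruct (fixed_point_above I U HU Htrans Hfree f a m Uf Ia Im fa fm)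
      as [z [Iz [fz mz]]]; [lra|].
    specialize (Hm z (conj Iz fz)). lra. }
  intros x y Ix Iy fx fy.
  destruct (Rtotal_order x y) as [H|[H|H]]; [exfalso; eauto | exact H | exfalso; eauto].
Qed.
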